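(* For $n\ge4$, any two distinct chambers $\Delta_{\pi}\neq\Delta_{\pi'}$ of $\mathfrak S_n$ intersect (if at all) in a face of dimension at most $(n-3)(n-2)/2-1$; equivalently, for two distinct circular orderings $\pi,\pi'$ of $X$, at most $(n-3)(n-2)/2$ nontrivial splits are circular with respect to both $\pi$ and $\pi'$.
   Context: $X$ is a set of $n\ge4$ labels. A split of $X$ is an unordered partition of $X$ into two nonempty sets; it is trivial if one part is a singleton. A circular ordering of $X$ is a cyclic arrangement $\pi=(x_1,\dots,x_n)$ up to rotation and reflection; a split is circular w.r.t. $\pi$ if it has the form $\{\{x_{i+1},\dots,x_j\},X\setminus\{x_{i+1},\dots,x_j\}\}$ (indices mod $n$). Give $\mathbb R^\delta$, $\delta=2^{n-1}-n-1$, coordinates indexed by nontrivial splits. For each circular ordering $\pi$, the chamber $\Delta_\pi$ is the set of nonnegative vectors with coordinate sum $1$ supported on splits circular w.r.t. $\pi$ (a simplex of dimension $n(n-3)/2-1$), and $\mathfrak S_n=\bigcup_\pi\Delta_\pi$. *)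

From mathcomp Require Import all_boot all_fingroup.
Set Implicit Arguments. Unset Strict Implicit. Unset Printing Implicit Defensive.

(* Labels X = 'I_n.  A circular ordering pi = (x_0,...,x_{n-1}) is represented
   by a permutation s : {perm 'I_n} with x_t = s t. *)

Definition cyc_interval (n : nat) (i : 'I_n) (k : nat) : {set 'I_n} :=
  [set t : 'I_n | ((t + n - i) %% n < k)%N].

Definition is_arc (n : nat) (s : {perm 'I_n}) (A : {set 'I_n}) : bool :=
  [exists i : 'I_n, exists k : 'I_n.+1, A == s @: cyc_interval i k].

Definition is_split (n : nat) (P : {set {set 'I_n}}) : bool :=
  [exists A : {set 'I_n}, [&& P == [set A; ~: A], A != set0 & A != setT]].

Definition nontrivial_split (n : nat) (P : {set {set 'I_n}}) : bool :=
  is_split P && [forall A in P, (1 < #|A|)%N].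

Definition circular_split (n : nat) (s : {perm 'I_n}) (P : {set {set 'I_n}}) : bool :=
  [exists A in P, is_arc s A].

(* Two orderings define the same circular ordering iff they differ by a
   rotation or a reflection of the index cycle. *)
Definition same_circular (n : nat) (s s' : {perm 'I_n}) : Prop :=
  exists c : nat,
    (forall t u : 'I_n, val u = ((c + t) %% n)%N -> s' t = s u) \/
    (forall t u : 'I_n, val u = ((c + (n - t)) %% n)%N -> s' t = s u).

Definition common_circular_splits (n : nat) (s s' : {perm 'I_n}) : {set {set {set 'I_n}}} :=
  [set P : {set {set 'I_n}} | [&& nontrivial_split P, circular_split s P & circular_split s' P]].

From mathcomp Require Import all_boot all_fingroup ssralg zmodp.
From mathcomp Require Import zify.
Set Implicit Arguments. Unset Strict Implicit. Unset Printing Implicit Defensive.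
Import GRing.Theory.

(* Write n = N + 1 and cut both circular orderings at z, the last element of s'.  A common
   nontrivial split is determined by its part B avoiding z, and B is a block of consecutive
   positions both in s' and in s.  Listing, for t < N, the position in s of the t-th element
   of s' gives a permutation of [0, N) in which B becomes a window of length at least 2
   carrying consecutive values; it is not the whole window, since the other part of the split
   has two elements.  The permutation is monotone only when s' is a rotation or a reflection
   of s.  A non-monotone permutation of length N has at most C(N-1, 2) + 1 windows with
   consecutive values: appending an entry to a non-monotone sequence of length k adds fewer
   than k of them, and for length at least 4 dropping the first or the last entry keeps a
   non-monotone sequence non-monotone. *)

(** * Windows of a sequence carrying consecutive values *)

Lemma sum_bool_le k (F : 'I_k -> bool) : \sum_(i < k) F i <= k.
Proof. by rewrite -[leqRHS]card_ord -sum1_card; apply: leq_sum => i _; apply: leq_b1. Qed.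

Lemma sum_bool_lt k (F : 'I_k -> bool) i : ~~ F i -> \sum_(j < k) F j < k.
Proof.
move=> Fi; rewrite (bigD1 i) //= (negbTE Fi) add0n.
apply: (@leq_ltn_trans (\sum_(j < k | j != i) 1)); first by apply: leq_sum => j _; apply: leq_b1.
by rewrite sum1_card cardC1 card_ord prednK // (leq_ltn_trans _ (ltn_ord i)).
Qed.

Lemma sorted_cons_rcons (T : Type) (r : rel T) (x y : T) (u : seq T) : 0 < size u ->
  sorted r (x :: u) -> sorted r (rcons u y) -> sorted r (x :: rcons u y).
Proof. by case: u => // u0 u _ /= /andP[-> _]. Qed.

(* For a permutation of [0, m) this says that s[p..q] carries consecutive values. *)
Definition value_interval (s : seq nat) (p q : nat) : bool :=
  [forall j : 'I_(size s), forall a : 'I_(size s), forall b : 'I_(size s),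
     [&& p <= a <= q, p <= b <= q & nth 0 s a < nth 0 s j < nth 0 s b] ==> (p <= j <= q)].

Lemma value_intervalP s p q :
  reflect (forall j a b, j < size s -> a < size s -> b < size s ->
             p <= a <= q -> p <= b <= q -> nth 0 s a < nth 0 s j < nth 0 s b -> p <= j <= q)
          (value_interval s p q).
Proof.
apply: (iffP forallP) => [H j a b jz az bz ai bi ajb | H j].
  have /forallP/(_ (Ordinal az))/forallP/(_ (Ordinal bz)) := H (Ordinal jz).
  by move/implyP; apply; rewrite /= ai bi.
by apply/forallP => a; apply/forallP => b; apply/implyP => /and3P[]; apply: H.
Qed.

Definition num_value_intervals (s : seq nat) : nat :=
  \sum_(q < size s) \sum_(p < q) value_interval s p q.

Lemma value_interval_full s : value_interval s 0 (size s).-1.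
Proof. by apply/value_intervalP => j a b jz *; rewrite /= -ltnS prednK // (leq_ltn_trans _ jz). Qed.

Lemma value_interval_rcons s x p q :
  q < size s -> value_interval (rcons s x) p q -> value_interval s p q.
Proof.
move=> qs /value_intervalP H; apply/value_intervalP => j a b jz az bz ai bi ajb.
apply: (H j a b); rewrite ?size_rcons ?nth_rcons ?jz ?az ?bz //; exact: ltnW.
Qed.

Lemma num_value_intervals_rcons s x : 2 <= size s ->
  num_value_intervals (rcons s x) + ~~ value_interval (rcons s x) 0 (size s).-1 <=
  num_value_intervals s + \sum_(p < size s) value_interval (rcons s x) p (size s).
Proof.
move=> s2; rewrite /num_value_intervals size_rcons big_ord_recr /= addnAC leq_add2r.
have restr q p : q < size s -> value_interval (rcons s x) p q <= value_interval s p q.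
  by move=> qs; case: (boolP (value_interval _ p q)) => // /(value_interval_rcons qs) ->.
move: s2 (value_interval_full s) restr; case: (size s) => [|[|k]] // _ full restr.
rewrite big_ord_recr [leqRHS]big_ord_recr /= -addnA leq_add //.
  by apply: leq_sum => q _; apply: leq_sum => p _; exact/restr/leqW.
rewrite !big_ord_recl /= full addnAC (_ : _ + ~~ _ = 1); last by case: value_interval.
by rewrite leq_add2l; apply: leq_sum => p _; apply: restr.
Qed.

Lemma monotone_of_value_intervals_rcons (s : seq nat) (x : nat) :
  uniq (rcons s x) -> value_interval (rcons s x) 0 (size s).-1 ->
  (forall p, 0 < p < size s -> value_interval (rcons s x) p (size s)) ->
  sorted ltn s || sorted gtn s.
Proof.
rewrite rcons_uniq => /andP[xs us] /value_intervalP full suf.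
have nth_s k : k < size s -> nth 0 (rcons s x) k = nth 0 s k by rewrite nth_rcons => ->.
have nth_x : nth 0 (rcons s x) (size s) = x by rewrite nth_rcons ltnn eqxx.
have neq a b : a < size s -> b < size s -> a != b -> nth 0 s a != nth 0 s b.
  by move=> az bz; rewrite nth_uniq.
have neqx a : a < size s -> nth 0 s a != x.
  by move=> az; apply: contraNneq xs => <-; rewrite mem_nth.
have x_outside a b : a < size s -> b < size s -> ~~ (nth 0 s a < x < nth 0 s b).
  move=> az bz; apply/negP => axb.
  have := full (size s) a b; rewrite size_rcons nth_x !nth_s //; lia.
have step i : i.+1 < size s ->
    ~~ (nth 0 s i.+1 < nth 0 s i < x) && ~~ (x < nth 0 s i < nth 0 s i.+1).
  move=> iz; have /value_intervalP V := suf i.+1 iz.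
  have := V i i.+1 (size s); have := V i (size s) i.+1.
  rewrite size_rcons nth_x !nth_s //; lia.
(* x lies above or below all of s, and the window [i+1, size s] then orders s_i, s_(i+1). *)
case: (boolP [exists a : 'I_(size s), nth 0 s a < x]) => [/existsP[a ax]|].
  have below b : b < size s -> nth 0 s b < x.
    by move=> bz; have := x_outside a b (ltn_ord a) bz; have := neqx b bz; lia.
  apply/orP; left; apply/(sortedP 0) => i iz.
  by have := step i iz; have := below i (ltnW iz); have := neq i i.+1; lia.
move/existsPn=> above; apply/orP; right; apply/(sortedP 0) => i iz.
have := step i iz; have := above (Ordinal (ltnW iz)); have := neqx i (ltnW iz).
by have := neq i i.+1; rewrite /gtn /=; lia.
Qed.

Lemma num_value_intervals_rcons_lt (s : seq nat) (x : nat) :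
  uniq (rcons s x) -> 2 <= size s -> ~~ sorted ltn s -> ~~ sorted gtn s ->
  num_value_intervals (rcons s x) < num_value_intervals s + size s.
Proof.
move=> U s2 nI nD; have := num_value_intervals_rcons x s2.
have last_le := sum_bool_le (fun p : 'I_(size s) => value_interval (rcons s x) p (size s)).
case: (boolP [exists p : 'I_(size s), (0 < p) && ~~ value_interval (rcons s x) p (size s)]).
  case/existsP=> p /andP[_ bad_p].
  by have := sum_bool_lt (F := fun p => value_interval (rcons s x) p (size s)) bad_p; lia.
move/existsPn=> all_good.
suff bad_full : ~~ value_interval (rcons s x) 0 (size s).-1 by rewrite bad_full; lia.
apply/negP => full; suff : sorted ltn s || sorted gtn s by rewrite (negbTE nI) (negbTE nD).
apply: monotone_of_value_intervals_rcons U full _ => p /andP[p0 ps].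
by have := all_good (Ordinal ps); rewrite p0 /= negbK.
Qed.

Lemma value_interval_rev (s : seq nat) p q : p <= q < size s ->
  value_interval (rev s) p q = value_interval s (size s - q.+1) (size s - p.+1).
Proof.
move=> pq; have nth_revK k : k < size s -> nth 0 (rev s) (size s - k.+1) = nth 0 s k.
  by move=> kz; rewrite nth_rev; [congr nth; lia | lia].
apply/value_intervalP/value_intervalP; rewrite size_rev => H j a b jz az bz ai bi ajb.
  have := H (size s - j.+1) (size s - a.+1) (size s - b.+1); rewrite !nth_revK //; lia.
have := H (size s - j.+1) (size s - a.+1) (size s - b.+1); rewrite -!nth_rev //; lia.
Qed.

Lemma num_value_intervalsE s : num_value_intervals s =
  \sum_(q < size s) \sum_(p < size s) ((p < q) && value_interval s p q).
Proof.
apply: eq_bigr => q _.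
rewrite (big_ord_widen _ (fun p => value_interval s p q : nat) (ltnW (ltn_ord q))).
by rewrite big_mkcond; apply: eq_bigr => p _; case: (p < q).
Qed.

Lemma num_value_intervals_rev s : num_value_intervals (rev s) = num_value_intervals s.
Proof.
rewrite !num_value_intervalsE size_rev exchange_big (reindex_inj rev_ord_inj) /=.
apply: eq_bigr => q _; rewrite (reindex_inj rev_ord_inj) /=; apply: eq_bigr => p _.
have [pm qm] := (ltn_ord p, ltn_ord q); rewrite ltn_sub2lE // ltnS; case: ltnP => //= pq.
by rewrite value_interval_rev; [congr value_interval; lia | lia].
Qed.

Lemma num_value_intervals_size3 (a b c : nat) :
  uniq [:: a; b; c] -> ~~ sorted ltn [:: a; b; c] -> ~~ sorted gtn [:: a; b; c] ->
  num_value_intervals [:: a; b; c] <= 2.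
Proof.
rewrite /num_value_intervals /= !big_ord_recr !big_ord0 /= !inE => U nI nD.
suff : ~~ (value_interval [:: a; b; c] 0 1 && value_interval [:: a; b; c] 1 2).
  by case: value_interval; case: value_interval; case: value_interval.
apply/negP => /andP[/value_intervalP H01 /value_intervalP H12].
have := H01 2 0 1; have := H01 2 1 0; have := H12 0 1 2; have := H12 0 2 1.
rewrite /=; lia.
Qed.

Lemma nonmonotone_size (s : seq nat) : uniq s -> ~~ sorted ltn s -> ~~ sorted gtn s -> 2 < size s.
Proof. by case: s => [|a [|b [|c s]]] //=; rewrite inE !andbT /=; lia. Qed.

Lemma monotone_cons_rcons (x y : nat) u : 2 <= size u ->
  sorted ltn (x :: u) || sorted gtn (x :: u) ->
  sorted ltn (rcons u y) || sorted gtn (rcons u y) ->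
  sorted ltn (x :: rcons u y) || sorted gtn (x :: rcons u y).
Proof.
move=> u2; have u0 : 0 < size u by case: u u2.
case/orP=> pre /orP[] suf; try by rewrite (sorted_cons_rcons u0 pre suf) ?orbT.
all: by case: u u2 u0 pre suf => [|u0 [|u1 u]] //= _ _ /and3P[_ p _] /andP[q _]; lia.
Qed.

Lemma num_value_intervals_rcons_le (s : seq nat) (x : nat) :
  uniq (rcons s x) -> ~~ sorted ltn s -> ~~ sorted gtn s ->
  num_value_intervals s <= 'C((size s).-1, 2) + 1 ->
  num_value_intervals (rcons s x) <= 'C(size s, 2) + 1.
Proof.
move=> U nI nD IH.
have s3 : 2 < size s by apply: nonmonotone_size nI nD; move: U; rewrite rcons_uniq => /andP[].
have := num_value_intervals_rcons_lt U (ltnW s3) nI nD.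
have -> : 'C(size s, 2) = 'C((size s).-1, 2) + (size s).-1.
  by case: (size s) s3 => // k _; rewrite binS bin1 addnC.
lia.
Qed.

Theorem num_value_intervals_nonmonotone (s : seq nat) :
  uniq s -> ~~ sorted ltn s -> ~~ sorted gtn s ->
  num_value_intervals s <= 'C((size s).-1, 2) + 1.
Proof.
have [m] := ubnP (size s); elim: m s => // m IH s sm U nI nD.
have s3 := nonmonotone_size U nI nD.
case: s s3 sm U nI nD => [//|x t]; case/lastP: t => [//|u y] s3 sm U nI nD.
move: s3; rewrite /= size_rcons !ltnS leq_eqVlt => /orP[/eqP u1 | u2].
  by case: u u1 {sm} U nI nD => [|b [|]] //= _; exact: num_value_intervals_size3.
have Uu : uniq (rcons u y) by case/andP: U.
case: (boolP (sorted ltn (x :: u) || sorted gtn (x :: u))) => [pre|].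
  case: (boolP (sorted ltn (rcons u y) || sorted gtn (rcons u y))) => [suf|].
    by have := monotone_cons_rcons u2 pre suf; rewrite (negbTE nI) (negbTE nD).
  rewrite negb_or => /andP[nI' nD'].
  rewrite -num_value_intervals_rev rev_cons -(size_rcons u y) -(size_rev (rcons u y)).
  have Urev : uniq (rev (rcons u y)) by rewrite rev_uniq.
  have rI : ~~ sorted ltn (rev (rcons u y)) by rewrite rev_sorted; exact: nD'.
  have rD : ~~ sorted gtn (rev (rcons u y)) by rewrite rev_sorted; exact: nI'.
  apply: num_value_intervals_rcons_le => //; first by rewrite -rev_cons rev_uniq.
  by apply: IH; rewrite // size_rev.
rewrite negb_or => /andP[nI' nD']; rewrite -rcons_cons.
have Upre : uniq (x :: u) by move: U; rewrite -rcons_cons rcons_uniq => /andP[].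
apply: num_value_intervals_rcons_le => //.
by apply: IH; move: sm; rewrite //= size_rcons.
Qed.

Lemma card_value_intervals (s : seq nat) :
  #|[set pq : 'I_(size s) * 'I_(size s) | (pq.1 < pq.2) && value_interval s pq.1 pq.2]| =
  num_value_intervals s.
Proof.
rewrite num_value_intervalsE exchange_big pair_bigA /= -sum1_card big_mkcond /=.
by apply: eq_bigr => pq _; rewrite inE; case: (_ && _).
Qed.

Lemma value_interval_of_range (s : seq nat) p q a l :
  (forall j, j < size s -> (p <= j <= q) = (a <= nth 0 s j < a + l)) -> value_interval s p q.
Proof.
move=> E; apply/value_intervalP => j a0 b0 jz az bz ai bi.
by rewrite (E a0 az) in ai; rewrite (E b0 bz) in bi; rewrite E //; lia.
Qed.

(** * Arcs of a circular ordering *)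

Section CyclicIntervals.
Variable N : nat.
Implicit Types (i t c : 'I_N.+1) (s : {perm 'I_N.+1}).

Lemma ltn_ord_max t : t != ord_max -> t < N.
Proof. by rewrite -val_eqE /=; have := ltn_ord t; lia. Qed.

Lemma val_subZp i t : ((t - i)%R : nat) = if i <= t then t - i else t + N.+1 - i.
Proof.
rewrite /= modnDmr addnBA ?(ltnW (ltn_ord i)) //.
case: leqP => it; last by rewrite modn_small; lia.
by rewrite -addnBAC // modnDr modn_small //; have := ltn_ord t; lia.
Qed.

Lemma cyc_intervalE i k t : (t \in cyc_interval i k) = ((t - i)%R < k).
Proof. by rewrite inE /= modnDmr addnBA // ltnW. Qed.

Lemma setC_cyc_interval i (k : 'I_N.+2) :
  ~: cyc_interval i k = cyc_interval (i + inZp k)%R (N.+1 - k).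
Proof.
apply/setP => t; rewrite in_setC !cyc_intervalE opprD addrA.
move: (t - i)%R => d; case: (ltnP k N.+1) => kn.
  have kZ : (inZp k : 'I_N.+1) = k :> nat by rewrite /= modn_small.
  by rewrite val_subZp kZ; have := ltn_ord d; case: (leqP k d); lia.
have kN : (k : nat) = N.+1 by have := ltn_ord k; lia.
have -> : inZp k = 0%R :> 'I_N.+1 by apply: val_inj; rewrite /= kN modnn.
by rewrite subr0 kN subnn ltn0 ltn_ord.
Qed.

Lemma mem_perm_imset s (C : {set 'I_N.+1}) y : (s y \in s @: C) = (y \in C).
Proof. by rewrite mem_imset //; exact: perm_inj. Qed.

Lemma is_arc_setC s A : is_arc s A -> is_arc s (~: A).
Proof.
case/existsP=> i /existsP[k /eqP ->]; apply/existsP; exists (i + inZp k)%R.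
have kn : N.+1 - k < N.+2 by rewrite ltnS leq_subr.
apply/existsP; exists (Ordinal kn); rewrite -setC_cyc_interval; apply/eqP/setP => x.
by rewrite -(permKV s x) in_setC !mem_perm_imset in_setC.
Qed.

Lemma arc_avoiding s B c : is_arc s B -> s c \notin B ->
  exists a l, a + l <= N /\ forall y : 'I_N.+1, (s y \in B) = (a <= (y - c + ord_max)%R < a + l).
Proof.
case/existsP=> i /existsP[k /eqP ->]; rewrite mem_perm_imset cyc_intervalE => cB.
move aE : (i - c + ord_max)%R => a.
have shift y : (y - i)%R = (y - c + ord_max - a)%R.
  by rewrite -aE opprD addrACA subrr addr0 opprB subrKA.
have aN : a <= N by rewrite -ltnS.
move: cB; rewrite shift subrr add0r val_subZp aN [ord_max : nat]/= => cB.
exists a, k; split=> [|y]; first by lia.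
rewrite mem_perm_imset cyc_intervalE shift val_subZp.
by move: (y - c + ord_max)%R => r; have := ltn_ord r; case: (leqP a r); lia.
Qed.

End CyclicIntervals.

Section SplitParts.
Variable n : nat.
Implicit Types (z : 'I_n) (A : {set 'I_n}) (P : {set {set 'I_n}}).

Definition part_avoiding z P : {set 'I_n} :=
  [set x | [exists A in P, (x \in A) && (z \notin A)]].

Lemma part_avoiding_pair z A : z \notin A -> part_avoiding z [set A; ~: A] = A.
Proof.
move=> zA; apply/setP => x; rewrite inE; apply/existsP/idP => [[B]|xA].
  by rewrite !inE => /andP[/orP[]/eqP-> /andP[xB zB]] //; rewrite inE zA in zB.
by exists A; rewrite !inE eqxx xA zA.
Qed.

Lemma split_part_avoiding z P : is_split P ->
  P = [set part_avoiding z P; ~: part_avoiding z P] /\ z \notin part_avoiding z P.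
Proof.
case/existsP=> A /and3P[/eqP-> _ _].
case: (boolP (z \in A)) => zA; last by rewrite part_avoiding_pair.
have -> : [set A; ~: A] = [set ~: A; ~: ~: A] by rewrite setCK setUC.
by rewrite part_avoiding_pair ?in_setC ?zA.
Qed.
End SplitParts.

Lemma is_arc_part_avoiding N (r : {perm 'I_N.+1}) z (P : {set {set 'I_N.+1}}) :
  is_split P -> circular_split r P -> is_arc r (part_avoiding z P).
Proof.
move=> /(split_part_avoiding z)[EP _] /existsP[A /andP[]].
rewrite {1}EP !inE => /orP[]/eqP-> // /is_arc_setC; by rewrite setCK.
Qed.

(** * Reading one circular ordering through another *)

Section RelativeOrder.
Variables (N : nat) (s s' : {perm 'I_N.+1}).

(* Position of s' t in s, counted from just after s' ord_max, which gets position N. *)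
Definition rel_pos (t : 'I_N.+1) : 'I_N.+1 :=
  ((s^-1)%g (s' t) - (s^-1)%g (s' ord_max) + ord_max)%R.

Definition rel_seq : seq nat := mkseq (fun i => rel_pos (inord i) : nat) N.

Lemma rel_pos_max : rel_pos ord_max = ord_max.
Proof. by rewrite /rel_pos subrr add0r. Qed.

Lemma rel_pos_inj : injective rel_pos.
Proof. by move=> t1 t2 /addIr/addIr/perm_inj/perm_inj. Qed.

Lemma rel_pos_lt t : t != ord_max -> rel_pos t < N.
Proof. by move=> tN; apply: ltn_ord_max; rewrite -rel_pos_max (inj_eq rel_pos_inj). Qed.

Lemma size_rel_seq : size rel_seq = N.
Proof. exact: size_mkseq. Qed.

Lemma nth_rel_seq i : i < N -> nth 0 rel_seq i = rel_pos (inord i).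
Proof. by move=> iN; rewrite nth_mkseq. Qed.

Lemma rel_seq_uniq : uniq rel_seq.
Proof.
rewrite map_inj_in_uniq ?iota_uniq // => i j; rewrite !mem_iota !add0n => iN jN.
by move/val_inj/rel_pos_inj/(congr1 (@nat_of_ord _)); rewrite !inordK // ltnW.
Qed.

Lemma mem_rel_seq : rel_seq =i iota 0 N.
Proof.
apply: (uniq_min_size rel_seq_uniq _ _).2; last by rewrite size_iota size_rel_seq.
move=> x /(nthP 0)[i]; rewrite size_rel_seq mem_iota add0n => iN <-.
rewrite nth_rel_seq // rel_pos_lt // -val_eqE /= inordK //; lia.
Qed.

Lemma same_circular_rot c : (forall t, (s^-1)%g (s' t) = (c + t)%R) -> same_circular s s'.
Proof.
move=> E; exists c; left=> t u ut; have -> : u = (c + t)%R by apply: val_inj.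
by rewrite -E permKV.
Qed.

Lemma same_circular_refl c : (forall t, (s^-1)%g (s' t) = (c - t)%R) -> same_circular s s'.
Proof.
move=> E; exists c; right=> t u ut; have -> : u = (c - t)%R by apply: val_inj; rewrite /= modnDmr.
by rewrite -E permKV.
Qed.

Lemma same_circular_of_sorted_ltn : sorted ltn rel_seq -> same_circular s s'.
Proof.
move=> so; have E : rel_seq = iota 0 N.
  exact: (irr_sorted_eq ltn_trans ltnn so (iota_ltn_sorted 0 N) mem_rel_seq).
have rel_id t : rel_pos t = t.
  have [->|tN] := eqVneq t ord_max; first exact: rel_pos_max.
  have tlt := ltn_ord_max tN; apply: ord_inj.
  by rewrite -[t in rel_pos t]inord_val -nth_rel_seq // E nth_iota.
apply: (@same_circular_rot ((s^-1)%g (s' ord_max) - ord_max)) => t.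
by rewrite -[t in RHS]rel_id /rel_pos addrCA !subrK.
Qed.

Lemma same_circular_of_sorted_gtn : 0 < N -> sorted gtn rel_seq -> same_circular s s'.
Proof.
move=> N0 so; have E : rev rel_seq = iota 0 N.
  apply: (irr_sorted_eq ltn_trans ltnn); rewrite ?rev_sorted //; first exact: iota_ltn_sorted.
  by move=> x; rewrite mem_rev mem_rel_seq.
have rel_sum t : (rel_pos t + t)%R = inord N.-1.
  apply: ord_inj; rewrite inordK; last by lia.
  have -> : ((rel_pos t + t)%R : nat) = (rel_pos t + t) %% N.+1 by [].
  have [->|tN] := eqVneq t ord_max.
    rewrite rel_pos_max /= (_ : N + N = N.-1 + N.+1); last by lia.
    by rewrite modnDr modn_small //; lia.
  have tlt := ltn_ord_max tN.
  rewrite -[t in rel_pos t]inord_val -nth_rel_seq // -(revK rel_seq) E nth_rev size_iota //.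
  by rewrite nth_iota ?modn_small; lia.
apply: (@same_circular_refl (inord N.-1 - ord_max + (s^-1)%g (s' ord_max))) => t.
by rewrite -(rel_sum t) /rel_pos (addrAC _ t) addrK (addrAC _ t) subrK addrK.
Qed.

Definition window (p q : nat) : {set 'I_N.+1} := [set t : 'I_N.+1 | p <= t <= q].

Definition split_window (P : {set {set 'I_N.+1}}) : {set 'I_N.+1} :=
  [set t | s' t \in part_avoiding (s' ord_max) P].

Lemma split_window_inj : {in [pred P | is_split P] &, injective split_window}.
Proof.
move=> P1 P2 sP1 sP2 E.
have [-> _] := split_part_avoiding (s' ord_max) sP1.
have [-> _] := split_part_avoiding (s' ord_max) sP2.
suff -> : part_avoiding (s' ord_max) P1 = part_avoiding (s' ord_max) P2 by [].
apply/setP => x; rewrite -(permKV s' x).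
by have /setP/(_ ((s'^-1)%g x)) := E; rewrite !inE.
Qed.

Lemma split_window_common P : P \in common_circular_splits s s' ->
  exists p q, [/\ p < q < N, value_interval rel_seq p q & split_window P = window p q].
Proof.
rewrite inE => /and3P[/andP[sP /forall_inP ntP] cP cP'].
set z := s' ord_max; set B := part_avoiding z P.
have [EP zB] := split_part_avoiding z sP.
have [a' [l' [al' E']]] := arc_avoiding (is_arc_part_avoiding z sP cP') zB.
have zB' : s ((s^-1)%g z) \notin B by rewrite permKV.
have [a [l [al E]]] := arc_avoiding (is_arc_part_avoiding z sP cP) zB'.
have mem_B t : (s' t \in B) = (a <= rel_pos t < a + l) by rewrite -{1}(permKV s (s' t)) E.
have mem_B' t : (s' t \in B) = (a' <= t < a' + l') by rewrite E' subrK.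
have l2 : 1 < l'.
  have /card_gt1P[x1 [x2 [x1B x2B x12]]] : 1 < #|B| by apply: ntP; rewrite EP !inE eqxx.
  move: x1B x2B; rewrite -(permKV s' x1) -(permKV s' x2) !mem_B'.
  have : ((s'^-1)%g x1 : nat) != (s'^-1)%g x2 by rewrite val_eqE (inj_eq perm_inj).
  lia.
exists a', (a' + l').-1; split; first by lia.
  apply: (@value_interval_of_range _ _ _ a l) => j; rewrite size_rel_seq => jN.
  by rewrite nth_rel_seq // -mem_B mem_B' inordK; lia.
by apply/setP => t; rewrite [t \in split_window P]inE [t \in window _ _]inE mem_B'; lia.
Qed.

Lemma split_window_common_full P : P \in common_circular_splits s s' ->
  split_window P != window 0 N.-1.
Proof.
rewrite inE => /and3P[/andP[sP /forall_inP ntP] _ _].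
set z := s' ord_max; set B := part_avoiding z P.
have [EP zB] := split_part_avoiding z sP.
have [y [yB yz]] : exists y, y \notin B /\ y != z.
  have /card_gt1P[y1 [y2 [y1B y2B y12]]] : 1 < #|~: B| by apply: ntP; rewrite EP !inE eqxx orbT.
  rewrite !in_setC in y1B y2B; have [e|] := eqVneq y1 z; last by exists y1.
  by exists y2; rewrite y2B -e eq_sym.
apply/eqP => /setP/(_ ((s'^-1)%g y)).
rewrite [_ \in split_window P]inE [_ \in window _ _]inE permKV (negbTE yB) /=.
have := ltn_ord_max (t := (s'^-1)%g y); rewrite -(inj_eq (perm_inj (s := s'))) permKV => /(_ yz).
lia.
Qed.

Lemma card_common_circular_splits_lt : 1 < N ->
  #|common_circular_splits s s'| < num_value_intervals rel_seq.
Proof.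
(* The whole window 0..N-1 is a value interval that is never a split window. *)
move=> N2; set C := common_circular_splits s s'.
rewrite -card_value_intervals; set pairs := [set pq | _].
set full := window 0 N.-1.
have sub : full |: (split_window @: C) \subset [set window (val pq.1) (val pq.2) | pq in pairs].
  apply/subsetP => X; rewrite in_setU1 => /orP[/eqP->|/imsetP[P PC ->]].
    have zN : 0 < size rel_seq by rewrite size_rel_seq; lia.
    have qN : N.-1 < size rel_seq by rewrite size_rel_seq; lia.
    apply/imsetP; exists (Ordinal zN, Ordinal qN) => //.
    rewrite inE /=; have := value_interval_full rel_seq; rewrite size_rel_seq => ->.
    by rewrite andbT; lia.
  have [p [q [/andP[pq qN] vi ->]]] := split_window_common PC.
  have pS : p < size rel_seq by rewrite size_rel_seq; lia.
  have qS : q < size rel_seq by rewrite size_rel_seq.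
  by apply/imsetP; exists (Ordinal pS, Ordinal qS); rewrite // inE /= pq.
have full_out : full \notin split_window @: C.
  by apply/imsetP => -[P PC /eqP]; apply/negP; rewrite eq_sym split_window_common_full.
have inj : {in C &, injective split_window}.
  have C_split P : P \in C -> is_split P by rewrite inE => /and3P[/andP[]].
  by move=> P1 P2 /C_split ? /C_split ?; exact: split_window_inj.
move: (subset_leq_card sub); rewrite cardsU1 full_out card_in_imset //.
by move/leq_trans; apply; apply: leq_imset_card.
Qed.

End RelativeOrder.

Theorem theorem9 (n : nat) (hn : (4 <= n)%N) (s s' : {perm 'I_n}) :
  ~ same_circular s s' ->
  (#|common_circular_splits s s'| <= ((n - 3) * (n - 2)) %/ 2)%N.
Proof.
case: n hn s s' => [//|N] hn s s' nsc.
have nI : ~~ sorted ltn (rel_seq s s') by apply/negP => /same_circular_of_sorted_ltn.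
have nD : ~~ sorted gtn (rel_seq s s').
  by apply/negP => /(same_circular_of_sorted_gtn (ltnW (ltnW hn))).
have := num_value_intervals_nonmonotone (rel_seq_uniq s s') nI nD.
have := card_common_circular_splits_lt s s' (ltnW hn).
have -> : ((N.+1 - 3) * (N.+1 - 2)) %/ 2 = 'C(N.-1, 2).
  by rewrite bin2 divn2 mulnC; congr (_ * _)./2; lia.
rewrite size_rel_seq; lia.
Qed.
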